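(* For every quantum type $A_Q$ of $\lambda_Q$, $\sharp[\![A_Q]\!]\simeq[\![A_Q]\!]$, i.e. the unitary types $\sharp[\![A_Q]\!]$ and $[\![A_Q]\!]$ have the same semantics.
   Context: Quantum types of $\lambda_Q$: $A_Q,B_Q::=\mathsf{qbit}\mid A_Q\otimes B_Q$, translated into unitary types by $[\![\mathsf{qbit}]\!]=\sharp(\mathbb U+\mathbb U)$ and $[\![A_Q\otimes B_Q]\!]=\sharp([\![A_Q]\!]\times[\![B_Q]\!])$. Unitary types are interpreted in a linear-algebraic lambda-calculus as sets of closed value distributions (formal $\mathbb C$-combinations of closed pure values $v::=\lambda x.\vec s\mid *\mid(v_1,v_2)\mid\mathtt{inl}(v)\mid\mathtt{inr}(v)$, modulo the weak-vector-space congruence, with canonical forms $\sum_i\alpha_iv_i$ with distinct $v_i$) of norm $1$, where $\|\sum_i\alpha_iv_i\|^2=\sum_i|\alpha_i|^2$ and $\mathcal S$ is the unit sphere: $[\![\mathbb U]\!]=\{*\}$, $[\![A+B]\!]=\{\mathtt{inl}(\vec v):\vec v\in[\![A]\!]\}\cup\{\mathtt{inr}(\vec w):\vec w\in[\![B]\!]\}$, $[\![A\times B]\!]=\{(\vec v,\vec w):\vec v\in[\![A]\!],\vec w\in[\![B]\!]\}$ (pairs extended bilinearly), $[\![\sharp A]\!]=\mathrm{Span}([\![A]\!])\cap\mathcal S$ with $\mathrm{Span}$ the set of finite $\mathbb C$-linear combinations. $A\simeq B$ means $[\![A]\!]=[\![B]\!]$. *)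

From mathcomp Require Import all_boot all_order all_algebra.
From mathcomp Require Import complex.
From Stdlib Require List.
Import GRing.Theory Num.Theory.
Set Implicit Arguments. Unset Strict Implicit. Unset Printing Implicit Defensive.
Local Open Scope ring_scope.

Inductive qtype : Type := Qbit | QTensor of qtype & qtype.

(* Unitary types (only the first-order fragment is needed here). *)
Inductive utype : Type :=
  | UUnit | USum of utype & utype | UProd of utype & utype | USharp of utype.

Fixpoint qtrans (A : qtype) : utype :=
  match A with
  | Qbit => USharp (USum UUnit UUnit)
  | QTensor A B => USharp (UProd (qtrans A) (qtrans B))
  end.

Section Lineal.
(* L : the (abstract) type of lambda-abstractions  \x. s  (their inner
   structure is irrelevant to the statement). C = R[i] : complex numbers. *)
Variables (L : Type) (R : rcfType).
Local Notation C := (R[i]).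

Inductive pval : Type :=
  | PLam of L | PStar | PPair of pval & pval | PInl of pval | PInr of pval.

(* A value distribution (class modulo the weak vector-space congruence) is
   represented by its canonical form  sum_i alpha_i v_i  (v_i distinct):
   d v = Some alpha  iff v occurs with coefficient alpha (possibly 0, since
   0.t is NOT identified with anything else in a weak vector space),
   d v = None iff v does not occur. *)
Definition dist := pval -> option C.

Definition dnone : dist := fun _ => None.
Definition dstar : dist := fun w => if w is PStar then Some 1 else None.
Definition dinl (d : dist) : dist := fun w => if w is PInl v then d v else None.
Definition dinr (d : dist) : dist := fun w => if w is PInr v then d v else None.
(* bilinear extension of pairs *)
Definition dpair (d e : dist) : dist := fun w =>
  match w with
  | PPair v1 v2 =>
      match d v1, e v2 with Some a, Some b => Some (a * b) | _, _ => None end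
  | _ => None
  end.
Definition dadd (d e : dist) : dist := fun w =>
  match d w, e w with
  | Some a, Some b => Some (a + b)
  | Some a, None => Some a
  | None, Some b => Some b
  | None, None => None
  end.
Definition dscale (g : C) (d : dist) : dist := fun w =>
  match d w with Some a => Some (g * a) | None => None end.

Definition lincomb (l : seq (C * dist)) : dist :=
  foldr (fun p acc => dadd (dscale p.1 p.2) acc) dnone l.

Definition Span (X : dist -> Prop) : dist -> Prop := fun d =>
  exists l : seq (C * dist),
    l <> [::] /\ List.Forall (fun p => X p.2) l /\ d = lincomb l.

Definition unit_sphere : dist -> Prop := fun d =>
  exists s : seq pval,
    List.NoDup s /\ (forall v, d v <> None <-> List.In v s) /\
    \sum_(v <- s) `|odflt 0 (d v)| ^+ 2 = 1.

Fixpoint sem (A : utype) : dist -> Prop :=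
  match A with
  | UUnit => fun d => d = dstar
  | USum A B => fun d =>
      (exists e, sem A e /\ d = dinl e) \/ (exists e, sem B e /\ d = dinr e)
  | UProd A B => fun d => exists e f, sem A e /\ sem B f /\ d = dpair e f
  | USharp A => fun d => Span (sem A) d /\ unit_sphere d
  end.

Definition usim (A B : utype) : Prop := sem A = sem B.

End Lineal.

From mathcomp Require Import all_boot all_order all_algebra.
From mathcomp Require Import complex.
From Stdlib Require Import FunctionalExtensionality PropExtensionality.
From Stdlib Require List.
Import GRing.Theory.
Local Open Scope ring_scope.

(* Every translated quantum type has the form #B, so it suffices that # is
   idempotent.  This holds because Span is a closure operator: X is contained
   in Span X, and a nonempty linear combination of linear combinations of
   elements of X is again one, so Span (Span X /\ S) adds nothing to Span X. *)

Section Distributions.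
Variables (L : Type) (R : rcfType).
Local Notation dist := (dist L R).

Lemma dadd_nonel (d : dist) : dadd (@dnone L R) d = d.
Proof. by apply: functional_extensionality => w; rewrite /dadd /dnone; case: (d w). Qed.

Lemma dadd_noner (d : dist) : dadd d (@dnone L R) = d.
Proof. by apply: functional_extensionality => w; rewrite /dadd /dnone; case: (d w). Qed.

Lemma daddA (d e f : dist) : dadd d (dadd e f) = dadd (dadd d e) f.
Proof.
apply: functional_extensionality => w; rewrite /dadd.
by case: (d w) => [a|]; case: (e w) => [b|]; case: (f w) => [c|]; rewrite ?addrA.
Qed.

Lemma dscaleDr g (d e : dist) : dscale g (dadd d e) = dadd (dscale g d) (dscale g e).
Proof.
apply: functional_extensionality => w; rewrite /dadd /dscale.
by case: (d w) => [a|]; case: (e w) => [b|]; rewrite ?mulrDr.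
Qed.

Lemma dscaleA g h (d : dist) : dscale g (dscale h d) = dscale (g * h) d.
Proof.
by apply: functional_extensionality => w; rewrite /dscale; case: (d w) => [a|]; rewrite ?mulrA.
Qed.

Lemma dscale1 (d : dist) : dscale 1 d = d.
Proof.
by apply: functional_extensionality => w; rewrite /dscale; case: (d w) => [a|]; rewrite ?mul1r.
Qed.

Lemma dscale_lincomb g (l : seq (R[i] * dist)) :
  dscale g (lincomb l) = lincomb [seq (g * p.1, p.2) | p <- l].
Proof. by elim: l => [|p l IHl] //=; rewrite dscaleDr IHl dscaleA. Qed.

Lemma lincomb_cat (l1 l2 : seq (R[i] * dist)) :
  lincomb (l1 ++ l2) = dadd (lincomb l1) (lincomb l2).
Proof. by elim: l1 => [|p l IHl] /=; rewrite ?dadd_nonel // IHl daddA. Qed.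

Section SpanClosure.
Variable X : dist -> Prop.

Lemma subset_Span d : X d -> Span X d.
Proof.
move=> Xd; exists [:: (1, d)]; split=> //; split; first by constructor.
by rewrite /= dadd_noner dscale1.
Qed.

Lemma Span_scale g d : Span X d -> Span X (dscale g d).
Proof.
case=> l [l_nil [Xl ->]]; exists [seq (g * p.1, p.2) | p <- l].
split; first by case: l l_nil {Xl}.
split; last exact: dscale_lincomb.
by apply/List.Forall_map; apply: List.Forall_impl Xl.
Qed.

Lemma Span_add d e : Span X d -> Span X e -> Span X (dadd d e).
Proof.
case=> l1 [l1_nil [Xl1 ->]] [l2 [_ [Xl2 ->]]]; exists (l1 ++ l2).
split; first by case: l1 l1_nil {Xl1}.
by split; [apply/List.Forall_app | rewrite lincomb_cat].
Qed.

Lemma Span_lincomb (l : seq (R[i] * dist)) :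
  l <> [::] -> List.Forall (fun p => Span X p.2) l -> Span X (lincomb l).
Proof.
elim: l => [//|[g d] l IHl] _ /List.Forall_cons_iff [/= Xd Xl] /=.
case: l IHl Xl => [|q l] IHl Xl; first by rewrite dadd_noner; apply: Span_scale.
by apply: Span_add; [apply: Span_scale | apply: IHl].
Qed.

Lemma Span_subset_Span (Y : dist -> Prop) d :
  (forall e, Y e -> Span X e) -> Span Y d -> Span X d.
Proof.
move=> YX [l [l_nil [Yl ->]]]; apply: Span_lincomb => //.
by apply: List.Forall_impl Yl => p /YX.
Qed.

End SpanClosure.

Lemma sem_sharp_idem (A : utype) :
  @sem L R (USharp (USharp A)) = @sem L R (USharp A).
Proof.
apply: functional_extensionality => d /=.
apply: propositional_extensionality; split.
- by case=> span_d sphere_d; split=> //; apply: Span_subset_Span span_d => e [].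
- by case=> span_d sphere_d; split=> //; apply: subset_Span.
Qed.

End Distributions.

Lemma qtrans_sharp (A : qtype) : exists B, qtrans A = USharp B.
Proof. by case: A => [|A B]; eexists. Qed.

Theorem lemma7 (L : Type) (R : rcfType) (A : qtype) :
  usim L R (USharp (qtrans A)) (qtrans A).
Proof.
have [B ->] := qtrans_sharp A.
exact: sem_sharp_idem.
Qed.
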